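(* Let $C_k$ be the last (rightmost) column of the diagram of a composition $(c_1,\dots,c_k)$ of $n$, and let $\mathcal B_k$ be the set of root vectors $x_{i,j}$ with $j$ an entry of $C_k$ and $i$ not an entry of $C_k$ (the last column block of $\mathfrak m$). (i) For every pair $(C,C')$ of neighbouring columns with $C'\neq C_k$, one has $\mathcal B_k\subseteq\mathfrak u_{C,C'}$; hence $\mathcal B_k\subseteq\mathfrak u'$, where $\mathfrak u'$ is the intersection of the $\mathfrak u_{C,C'}$ over all neighbouring pairs $(C,C')$ with $C'\ne C_k$. (ii) If no other column of the diagram has height $c_k$, then $\mathcal B_k\subseteq\mathfrak u_{\pi'}$.
   Context: Let $n\ge 2$, $x_{i,j}$ the $n\times n$ matrix unit with $1$ in position $(i,j)$. A composition $(c_1,\dots,c_k)$ of $n$ determines the standard parabolic subalgebra of block upper triangular matrices with diagonal blocks of sizes $c_1,\dots,c_k$, whose nilradical $\mathfrak m$ is spanned by the $x_{i,j}$, $i<j$ in different blocks. Diagram and tableau: columns $C_1,\dots,C_k$ from left to right, $C_i$ having $c_i$ boxes in rows $R_1,\dots,R_{c_i}$ (rows numbered top to bottom), filled with $1,\dots,n$ so that $C_i$ contains $c_1+\dots+c_{i-1}+1,\dots,c_1+\dots+c_i$, increasing downwards. Two columns of the same height $s$ are neighbouring if no column of height $s$ lies strictly between them. Shifted tableau and $\mathfrak u_{C,C'}$: let $C$ (left) and $C'$ (right) be neighbouring columns of height $s$, and let $N$ be the largest entry of $C'$. Let $D_1,\dots,D_u$ ($u\ge 0$) be the columns of height $>s$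 strictly between $C$ and $C'$, left to right, and $D_0=C$. For a column $D$, let $D^{\le s}$ be the set of entries in its top $s$ boxes and $D^{>s}$ the remaining entries; put $D_{u+1}^{>s}:=\{N\}$. Replace, for $0\le i\le u$, the column $D_i$ by the column with entries $D_i^{\le s}\cup D_{i+1}^{>s}$; replace $C'$ by $C'$ with $N$ removed; leave other columns unchanged. Reading the new columns left to right, each from bottom to top, gives a word $w_{C,C'}$ (a permutation of $1,\dots,n$). $\mathfrak u_{C,C'}$ is the span of the $x_{i,j}$, $i<j$, such that $i$ occurs before $j$ in $w_{C,C'}$. Finally $\mathfrak u_{\pi'}$ is the intersection of the $\mathfrak u_{C,C'}$ over all pairs $(C,C')$ of neighbouring columns. *)

From mathcomp Require Import all_boot.
Set Implicit Arguments. Unset Strict Implicit. Unset Printing Implicit Defensive.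

(* A composition c = [:: c_1; ...; c_k] of n (all parts positive, sumn c = n).
   Columns are indexed 0 .. k-1 (column C_{m+1} of the paper is index m). *)
Definition composition (n : nat) (c : seq nat) : Prop :=
  all (fun x => 0 < x) c /\ sumn c = n.

Definition ht (c : seq nat) (m : nat) : nat := nth 0 c m.

Definition pre (c : seq nat) (m : nat) : nat := sumn (take m c).

(* entries of column m, listed top to bottom (increasing downwards) *)
Definition col (c : seq nat) (m : nat) : seq nat := iota (pre c m).+1 (ht c m).

Definition neighbouring (c : seq nat) (a b : nat) : Prop :=
  [/\ a < b, b < size c, ht c a = ht c b &
      forall m, a < m < b -> ht c m <> ht c a].

(* the columns D_1,...,D_u strictly between a and b of height > s = ht c a,
   left to right *)
Definition Ds (c : seq nat) (a b : nat) : seq nat :=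
  [seq x <- iota a.+1 (b - a).-1 | ht c a < ht c x].

(* the new column replacing column m in the shifted tableau for (C,C')=(col a, col b),
   listed top to bottom *)
Definition newcol (c : seq nat) (a b m : nat) : seq nat :=
  let s := ht c a in
  let N := pre c b + ht c b in
  if (m == a) || (m \in Ds c a b) then
    (* D_i^{<= s} together with D_{i+1}^{> s}, where D_{u+1}^{> s} = {N} *)
    let m' := head b [seq x <- Ds c a b | m < x] in
    take s (col c m) ++ (if m' == b then [:: N] else drop s (col c m'))
  else if m == b then rem N (col c b)
  else col c m.

(* the word w_{C,C'}: new columns left to right, each read bottom to top *)
Definition word (c : seq nat) (a b : nat) : seq nat :=
  flatten [seq rev (newcol c a b m) | m <- iota 0 (size c)].

(* root vectors x_{i,j} are identified with index pairs (i,j), entries 1..n.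
   u_{C,C'} is the span of x_{i,j}, i<j, i before j in w_{C,C'};
   we record its set of spanning root vectors. *)
Definition in_u (c : seq nat) (a b i j : nat) : Prop :=
  i < j /\ index i (word c a b) < index j (word c a b).

Definition in_u' (c : seq nat) (i j : nat) : Prop :=
  forall a b, neighbouring c a b -> b <> (size c).-1 -> in_u c a b i j.

Definition in_upi' (c : seq nat) (i j : nat) : Prop :=
  forall a b, neighbouring c a b -> in_u c a b i j.

Definition in_Bk (n : nat) (c : seq nat) (i j : nat) : Prop :=
  [/\ 1 <= i <= n, j \in col c (size c).-1 & i \notin col c (size c).-1].

From mathcomp Require Import all_boot.
From mathcomp Require Import zify.
Set Implicit Arguments. Unset Strict Implicit. Unset Printing Implicit Defensive.

(* Let L be the index of the last column C_k, and let (C,C')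
   be neighbouring columns (indices a < b) with b < L.  The shifting procedure
   only moves entries between the columns a, D_1, ..., D_u, b, all strictly
   left of L; hence
   - the new column at L is C_k itself, so the word w_{C,C'} is P ++ rev C_k,
     where P reads the new columns 0, ..., L-1;
   - every new column left of L only contains entries <= pre c L, i.e. entries
     not in C_k, so no entry j of C_k occurs in P;
   - conversely every entry of a column left of L lands in some new column left
     of L (an entry moved out of D_{i+1} or C' lands in its predecessor in the
     chain a, D_1, ..., D_u), so every entry i outside C_k occurs in P.
   Thus i precedes j in w_{C,C'}, and i < j since i <= pre c L < j.  Part (i)
   follows, and (ii) reduces to (i): when C_k has no other column of its
   height, no neighbouring pair (C,C') has C' = C_k. *)

Lemma pre_succ c m : m < size c -> pre c m.+1 = pre c m + ht c m.
Proof. by move=> mc; rewrite /pre /ht (take_nth 0 mc) -cats1 sumn_cat /= addn0. Qed.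

Lemma pre_mono c m m' : m <= m' -> pre c m <= pre c m'.
Proof.
move=> le_mm'; rewrite /pre -(take_takel c le_mm').
by rewrite -{2}(cat_take_drop m (take m' c)) sumn_cat leq_addr.
Qed.

Lemma mem_col c m x : (x \in col c m) = (pre c m < x <= pre c m + ht c m).
Proof. rewrite /col mem_iota; lia. Qed.

Lemma col_le_pre_last c m x :
  m < (size c).-1 -> x \in col c m -> x <= pre c (size c).-1.
Proof.
move=> mL; rewrite mem_col => /andP[_ x_le].
have := pre_mono c mL; rewrite pre_succ; lia.
Qed.

Lemma entry_in_earlier_col c m x : m <= size c -> 1 <= x <= pre c m ->
  exists2 m0, m0 < m & x \in col c m0.
Proof.
elim: m => [|m IH] mc hx; first by rewrite /pre take0 /= in hx; lia.
case: (leqP x (pre c m)) => x_le.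
  by have [|m0 m0m xm0] := IH (ltnW mc); [lia | exists m0 => //; lia].
by exists m => //; rewrite mem_col; rewrite pre_succ // in hx; lia.
Qed.

Lemma mem_Ds c a b x : a < b ->
  (x \in Ds c a b) = [&& a < x, x < b & ht c a < ht c x].
Proof.
move=> ab; rewrite /Ds mem_filter mem_iota.
by case: (ht c a < ht c x); rewrite /= ?andbF ?andbT //; lia.
Qed.

Lemma sorted_Ds c a b : sorted ltn (Ds c a b).
Proof. apply: sorted_filter; [exact: ltn_trans | exact: iota_ltn_sorted]. Qed.

Lemma head_filter_sorted (s : seq nat) m d : sorted ltn s -> m \in s ->
  head d [seq x <- s | m <= x] = m.
Proof.
elim: s => //= y s IH s_sorted; rewrite in_cons; case: eqP => [-> _|_ /= ms].
  by rewrite leqnn.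
have ym : y < m by have /allP := order_path_min ltn_trans s_sorted; apply.
by rewrite leqNgt ym /=; apply: IH (path_sorted s_sorted) ms.
Qed.

Lemma chain_pred c a b m : a < m <= b ->
  exists2 p, (p == a) || (p \in Ds c a b) &
    p < m /\ forall x, p < x < m -> x \notin Ds c a b.
Proof.
elim: m => [|m IH] /andP[am mb]; first by [].
have ab : a < b by lia.
have [am' | ma] := ltnP a m; last first.
  by exists a; rewrite ?eqxx //; split=> [|x]; lia.
have [|p hp [pm gap]] := IH; first lia.
case mD: (m \in Ds c a b).
  by exists m; rewrite ?mD ?orbT //; split=> [|x]; lia.
exists p => //; split=> [|x hx]; first lia.
have [->|xm] := eqVneq x m; first by rewrite mD.
by apply: gap; lia.
Qed.

(* Conversely, the successor of such a predecessor p (the column whose lower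
   part is moved into p, or C' itself) is m. *)
Lemma chain_succ c a b p m : a < b -> p < m <= b ->
  (forall x, p < x < m -> x \notin Ds c a b) ->
  (m \in Ds c a b) || (m == b) ->
  head b [seq x <- Ds c a b | p < x] = m.
Proof.
move=> ab /andP[pm mb] gap hm.
have -> : [seq x <- Ds c a b | p < x] = [seq x <- Ds c a b | m <= x].
  apply: eq_in_filter => x xD; case: (ltnP x m) => xm; last by apply/idP; lia.
  by apply/negbTE/negP => px; move: (gap x); rewrite px xm xD => /(_ isT).
case/orP: hm => [mD | /eqP ->]; first exact: head_filter_sorted (sorted_Ds c a b) mD.
suff -> : [seq x <- Ds c a b | b <= x] = [::] by [].
apply/eqP; rewrite -(negbK (_ == _)) -has_filter; apply/hasPn => x.
by rewrite mem_Ds //; lia.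
Qed.

Lemma chain_next_le c a b m : a < b -> head b [seq x <- Ds c a b | m < x] <= b.
Proof.
move=> ab; case E: [seq x <- _ | _] => [//|y s] /=.
have : y \in [seq x <- Ds c a b | m < x] by rewrite E mem_head.
by rewrite mem_filter mem_Ds // => /andP[_ /and3P[_ /ltnW]].
Qed.

Section Shifted.

Variables (c : seq nat) (a b : nat).
Hypothesis nb : neighbouring c a b.
Hypothesis bL : b < (size c).-1.

Let ab : a < b. Proof. by case: nb. Qed.

Lemma newcol_last : newcol c a b (size c).-1 = col c (size c).-1.
Proof.
rewrite /newcol mem_Ds // ifF; last by apply/orP; case; [move/eqP|]; lia.
by rewrite ifF //; apply/eqP; lia.
Qed.

Lemma newcol_le_pre_last m x : m < (size c).-1 ->
  x \in newcol c a b m -> x <= pre c (size c).-1.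
Proof.
move=> mL; rewrite /newcol; case: ifP => _; last first.
  case: ifP => [/eqP _|_]; last exact: col_le_pre_last.
  by move/mem_rem; apply: col_le_pre_last; lia.
rewrite mem_cat => /orP[/mem_take|]; first exact: col_le_pre_last.
have m'L : head b [seq x <- Ds c a b | m < x] < (size c).-1.
  by have := chain_next_le c m ab; lia.
case: ifP => _; last by move/mem_drop; apply: col_le_pre_last.
by rewrite inE => /eqP ->; rewrite -pre_succ; [apply: pre_mono | lia].
Qed.

Lemma moved_entry_placed m x : a < m <= b -> (m \in Ds c a b) || (m == b) ->
  x \in (if m == b then [:: pre c b + ht c b] else drop (ht c a) (col c m)) ->
  exists2 p, p < m & x \in newcol c a b p.
Proof.
move=> am_b mD hx; have [p hp [pm gap]] := chain_pred c am_b.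
exists p => //; rewrite /newcol hp (chain_succ ab _ gap mD); last lia.
by rewrite mem_cat hx orbT.
Qed.

Lemma newcol_covers m0 x : m0 < (size c).-1 -> x \in col c m0 ->
  exists2 m, m < (size c).-1 & x \in newcol c a b m.
Proof.
move=> m0L xm0.
case chain: ((m0 == a) || (m0 \in Ds c a b)).
  move: xm0; rewrite -(cat_take_drop (ht c a) (col c m0)) mem_cat.
  case/orP=> [x_top | x_low]; first by exists m0; rewrite // /newcol chain mem_cat x_top.
  have m0D : m0 \in Ds c a b.
    case/orP: chain => [/eqP m0a|//]; move: x_low.
    by rewrite m0a drop_oversize // size_iota.
  have := m0D; rewrite mem_Ds // => /and3P[am0 m0b _].
  have m0_ne_b : m0 != b by rewrite neq_ltn m0b.
  have [|||p pm0 xp] := @moved_entry_placed m0 x.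
  - lia.
  - by rewrite m0D.
  - by rewrite ifN.
  - by exists p => //; lia.
have [m0b | m0b] := eqVneq m0 b; last by exists m0; rewrite // /newcol chain ifN.
rewrite {}m0b in chain xm0 m0L; have [xN | xN] := eqVneq x (pre c b + ht c b).
  have [|||p pb xp] := @moved_entry_placed b x.
  - by rewrite ab leqnn.
  - by rewrite eqxx orbT.
  - by rewrite eqxx xN mem_head.
  - by exists p => //; lia.
exists b => //; rewrite /newcol chain eqxx.
by rewrite (mem_rem_uniq _ (iota_uniq _ _)) inE xN xm0.
Qed.

Lemma word_split : word c a b =
  flatten [seq rev (newcol c a b m) | m <- iota 0 (size c).-1]
  ++ rev (col c (size c).-1).
Proof.
have c_pos : 0 < size c by lia.
rewrite /word -[X in iota 0 X](prednK c_pos) -addn1 iotaD map_cat flatten_cat.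
by rewrite /= cats0 add0n newcol_last.
Qed.

Lemma last_block_in_u n i j : composition n c -> in_Bk n c i j -> in_u c a b i j.
Proof.
move=> [_ sum_c] [/andP[i_ge1 i_le] jL iL].
have LS : (size c).-1 < size c by lia.
have pre_last : pre c (size c).-1 + ht c (size c).-1 = n.
  by rewrite -pre_succ // prednK ?/pre ?take_size //; lia.
rewrite mem_col in jL; rewrite mem_col in iL.
have i_le_pre : i <= pre c (size c).-1 by lia.
rewrite /in_u word_split; set P := flatten _.
have jP : j \notin P.
  apply/flatten_mapP => -[m]; rewrite mem_iota mem_rev => /andP[_ mL].
  by move/(newcol_le_pre_last mL); lia.
have iP : i \in P.
  have [|m0 m0L im0] := @entry_in_earlier_col c (size c).-1 i (ltnW LS); first lia.
  have [m mL im] := newcol_covers m0L im0.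
  by apply/flatten_mapP; exists m; rewrite ?mem_iota ?mem_rev.
split; first lia.
rewrite !index_cat (negbTE jP) iP.
by have := index_mem i P; rewrite iP; lia.
Qed.

End Shifted.

Theorem lemma2p9 (n : nat) (c : seq nat) :
  2 <= n -> composition n c ->
  (* (i) *)
  ((forall a b, neighbouring c a b -> b <> (size c).-1 ->
      forall i j, in_Bk n c i j -> in_u c a b i j)
   /\ (forall i j, in_Bk n c i j -> in_u' c i j))
  /\
  (* (ii) *)
  ((forall m, m < (size c).-1 -> ht c m <> ht c (size c).-1) ->
      forall i j, in_Bk n c i j -> in_upi' c i j).
Proof.
move=> _ comp_c.
have part_i a b : neighbouring c a b -> b <> (size c).-1 ->
    forall i j, in_Bk n c i j -> in_u c a b i j.
  move=> nb b_ne_L i j; apply: (last_block_in_u nb _ comp_c).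
  by case: nb => _ bc _ _; lia.
split; first by split=> // i j Bij a b nb b_ne_L; apply: part_i.
(* If C_k is the only column of its height, no neighbouring pair ends at C_k. *)
move=> unique_ht i j Bij a b nb; apply: (part_i _ _ nb) Bij => b_L.
have [ab _ ht_ab _] := nb.
by apply: (unique_ht a); [lia | rewrite ht_ab b_L].
Qed.
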